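(* Let $K$ and $K'$ be two CMIs. Then $\mathrm{can}(\mathrm{pur}(K))=\mathrm{can}(\mathrm{pur}(K'))$ if and only if $K'$ is a sub-CMI of $K$ and $K$ is a sub-CMI of $K'$.
   Context: Setting: $X_1,\dots,X_n$ jointly distributed discrete random variables with $H(X_i)<\infty$; distribution unspecified. $X_\alpha=(X_i,i\in\alpha)$, $X_\emptyset$ constant. A CMI is $K=(C,\langle Q_1,\dots,Q_k\rangle)$, $k\ge0$, $C\subseteq\{1,\dots,n\}$, $\langle\cdot\rangle$ an unordered multiset of subsets; valid (for a given distribution) if $\sum_iH(X_{Q_i}|X_C)-H(X_{Q_1},\dots,X_{Q_k}|X_C)=0$. Empty members may be deleted; equality of CMIs means equal conditioning sets and equal multisets. Degenerate = valid for every distribution; all degenerate CMIs are identified and written $(\cdot,\langle\ \rangle)$. $\mathrm{pur}(K)=(C,\langle Q_i\setminus C:Q_i\setminus C\ne\emptyset\rangle)$. For pure $K$: $\mathbb I_K$ = indices lying in at least two members of the collection if $k\ge2$, else $\emptyset$; $P_1,\dots,P_t$ the nonempty sets among $Q_i\setminus\mathbb I_K$; $\mathrm{can}(K)=(\cdot,\langle\ \rangle)$ if $k\le1$, $(C,\langle\mathbb I_K,\mathbb I_K\rangle)$ if $k\ge2,\mathbb I_K\ne\emptyset,t\le1$, $(C,\langle P_1..P_t\rangle)$ if $k\ge2,\mathbb I_K=\emptyset$, $(C,\langle\mathbb I_K,\mathbb I_K,P_1..P_t\rangle)$ if $k\ge2,\mathbb I_K\ne\emptyset,t\ge2$. For general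 $K$, $\mathbb I_K$ is the repeated-index set of $\mathrm{pur}(K)$ and $\mathrm{can}(\mathrm{pur}(K))$ is written $(C,\langle\mathbb I_K,\mathbb I_K,P_i,1\le i\le t\rangle)$ (copies of $\mathbb I_K$ omitted if empty; degenerate $K$ has $\mathbb I_K=\emptyset$, $t\in\{0,1\}$). $P=\bigcup_iP_i$, $S=C\cup P$. $R_K^{K'}$: with $\mathrm{can}(\mathrm{pur}(K'))=(C',\langle\mathbb I_{K'},\mathbb I_{K'},P'_j,1\le j\le s\rangle)$, $D=\mathbb I_{K'}\setminus\mathbb I_K$ and $T_1,\dots,T_u$ the nonempty sets among $P'_j\setminus\mathbb I_K$: $R_K^{K'}=(\cdot,\langle\ \rangle)$ if $D=\emptyset,u\le1$; $(C'\setminus\mathbb I_K,\langle T_1..T_u\rangle)$ if $D=\emptyset,u\ge2$; $(C'\setminus\mathbb I_K,\langle D,D\rangle)$ if $D\ne\emptyset,u\le1$; $(C'\setminus\mathbb I_K,\langle D,D,T_1..T_u\rangle)$ if $D\ne\emptyset,u\ge2$. Sub-CMI: with $K''=R_K^{K'}$, $\mathrm{can}(\mathrm{pur}(K''))=(C'',\langle\mathbb I_{K''},\mathbb I_{K''},P''_j,1\le j\le r\rangle)$, $P''=\bigcup_jP''_j$, $K'$ is a sub-CMI of $K$ if: (i) $K'=(\cdot,\langle\ \rangle)$; or (ii) $\mathrm{can}(\mathrm{pur}(K''))=(\cdot,\langle\ \rangle)$ and $C\subseteq C'$; or (iii) $\mathrm{can}(\mathrm{pur}(K''))\ne(\cdot,\langle\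 \rangle)$, $\mathbb I_{K''}=\emptyset$, $P''\subseteq P$, $C\subseteq C''\subseteq S\setminus P''$, and whenever $m_1\in P''_{j_1}$, $m_2\in P''_{j_2}$ with $j_1\ne j_2$, then $m_1\in P_{i_1}$, $m_2\in P_{i_2}$ with $i_1\ne i_2$. *)

From mathcomp Require Import all_boot.
Set Implicit Arguments. Unset Strict Implicit. Unset Printing Implicit Defensive.

(* Indices {1,...,n} are represented by 'I_n.  A CMI K = (C, <Q_1,...,Q_k>)
   is a conditioning set together with a list of subsets, the list being
   read as a multiset (up to permutation). *)
Record cmi (n : nat) := CMI { cond : {set 'I_n}; memb : seq {set 'I_n} }.

Section CMI.
Variable n : nat.
Implicit Types K : cmi n.

Definition deg : cmi n := CMI set0 [::].

Definition pur K : cmi n :=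
  CMI (cond K) [seq Q :\: cond K | Q <- memb K & Q :\: cond K != set0].

(* degenerate (valid for every distribution): after purification at most
   one member remains *)
Definition degen K : bool := size (memb (pur K)) <= 1.

Definition cmi_eq K1 K2 : bool :=
  (degen K1 && degen K2) ||
  ((cond K1 == cond K2) &&
   perm_eq [seq Q <- memb K1 | Q != set0] [seq Q <- memb K2 | Q != set0]).

Definition Iset_pure K : {set 'I_n} :=
  if 2 <= size (memb K)
  then [set i | 2 <= count (fun Q : {set 'I_n} => i \in Q) (memb K)]
  else set0.

Definition Pseq_pure K : seq {set 'I_n} :=
  [seq Q :\: Iset_pure K | Q <- memb K & Q :\: Iset_pure K != set0].

(* can(K) for pure K *)
Definition can K : cmi n :=
  let I := Iset_pure K in let Ps := Pseq_pure K in
  if size (memb K) <= 1 then deg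
  else if I == set0 then CMI (cond K) Ps
  else if size Ps <= 1 then CMI (cond K) [:: I; I]
  else CMI (cond K) [:: I, I & Ps].

Definition IK K : {set 'I_n} := Iset_pure (pur K).
Definition PK K : seq {set 'I_n} := Pseq_pure (pur K).
Definition Punion K : {set 'I_n} := \bigcup_(Q <- PK K) Q.
Definition SK K : {set 'I_n} := cond K :|: Punion K.

Definition Rcmi K K' : cmi n :=
  let D := IK K' :\: IK K in
  let Ts := [seq P :\: IK K | P <- PK K' & P :\: IK K != set0] in
  let C0 := cond K' :\: IK K in
  if D == set0 then
    (if size Ts <= 1 then deg else CMI C0 Ts)
  else
    (if size Ts <= 1 then CMI C0 [:: D; D] else CMI C0 [:: D, D & Ts]).

Definition subCMI K' K : Prop :=
  let K'' := Rcmi K K' in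
  let P'' := PK K'' in
  degen K' \/
  (degen (can (pur K'')) /\ cond K \subset cond K') \/
  (~~ degen (can (pur K'')) /\ IK K'' = set0 /\
   Punion K'' \subset Punion K /\
   cond K \subset cond K'' /\ cond K'' \subset SK K :\: Punion K'' /\
   (forall (j1 j2 : nat) (m1 m2 : 'I_n),
      j1 < size P'' -> j2 < size P'' -> j1 != j2 ->
      m1 \in nth set0 P'' j1 -> m2 \in nth set0 P'' j2 ->
      exists i1 i2 : nat,
        [/\ i1 < size (PK K), i2 < size (PK K), i1 != i2,
            m1 \in nth set0 (PK K) i1 & m2 \in nth set0 (PK K) i2])).

End CMI.

From mathcomp Require Import all_boot zify.

(* For a nondegenerate K, can(pur K) records exactly the conditioning set C,
   the repeated-index set I_K and, when there are at least two of them, the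
   multiset of blocks P_i; equality of canonical forms is agreement of these
   data ([can_equiv]).
   When I_K = I_K', the CMI R_K^K' is (C', <P'_j>), so that "K' is a sub-CMI
   of K" says C <= C' and, if K' has two blocks, that the union of the P'_j is
   contained in that of the P_i and that points in different blocks P'_j lie
   in different blocks P_i.  A repeated index of K' outside I_K survives in
   R_K^K' as a doubled member, which clauses (ii) and (iii) both exclude.
   Hence mutual sub-CMIs share I and C, and their blocks are two partitions of
   the same set each separating what the other separates, so they coincide.
   A degenerate K has no nondegenerate sub-CMI, since the separation clause
   would require two blocks in K. *)

Set Implicit Arguments. Unset Strict Implicit. Unset Printing Implicit Defensive.

Section SubCMI.
Variable n : nat.
Implicit Types (K : cmi n) (C I P : {set 'I_n}) (M A B : seq {set 'I_n}) (i : 'I_n).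

(* Removing I from every member and dropping the emptied ones: on the members
   of K with I := C this is pur, on those of pur K with I := I_K it gives the
   P_i, and on the P'_j with I := I_K it gives the T_j of R_K^K'. *)
Definition purify I M : seq {set 'I_n} := [seq Q :\: I | Q <- M & Q :\: I != set0].

Definition pure_members C M : bool :=
  all (fun Q : {set 'I_n} => (Q != set0) && [disjoint Q & C]) M.

Definition disjoint_members M : bool :=
  pairwise (fun A B : {set 'I_n} => [disjoint A & B]) M.

Lemma memb_pur K : memb (pur K) = purify (cond K) (memb K).
Proof. by []. Qed.

Lemma PKE K : PK K = purify (IK K) (memb (pur K)).
Proof. by []. Qed.

Lemma pure_membersW C C' M : C' \subset C -> pure_members C M -> pure_members C' M.
Proof.
move=> sC'C /allP pureM; apply/allP => Q /pureM /andP[-> /=].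
exact: disjointWr.
Qed.

Lemma purify_pure I M : pure_members I (purify I M).
Proof.
apply/allP => _ /mapP[Q /[!mem_filter] /andP[QI0 _] ->].
by rewrite QI0 -setI_eq0 setDE -setIA (setIC _ I) setICr setI0 eqxx.
Qed.

Lemma purify_pureW C I M : pure_members C M -> pure_members C (purify I M).
Proof.
move=> /allP pureM; apply/allP => _ /mapP[Q /[!mem_filter] /andP[QI0 /pureM/andP[_ QC]] ->].
by rewrite QI0 (disjointWl (subsetDl Q I) QC).
Qed.

Lemma purify_id C M : pure_members C M -> purify C M = M.
Proof.
rewrite /purify; elim: M => //= Q M IH /andP[/andP[Q0 /setDidPl QC] /IH].
by rewrite QC Q0 /= QC => ->.
Qed.

Lemma size_purify I M : size (purify I M) <= size M.
Proof. by rewrite size_map size_filter count_size. Qed.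

Lemma count_disjoint_members M i :
  disjoint_members M -> count (fun Q : {set 'I_n} => i \in Q) M <= 1.
Proof.
elim: M => //= Q M IH /andP[QM /IH]; case: (boolP (i \in Q)) => //= iQ _.
rewrite add1n ltnS leqn0 eqn0Ngt -has_count; apply/hasPn => Q' Q'M.
by rewrite (disjointFr (allP QM Q' Q'M) iQ).
Qed.

Lemma purify_disjoint I M :
  (forall i, 2 <= count (fun Q : {set 'I_n} => i \in Q) M -> i \in I) ->
  disjoint_members (purify I M).
Proof.
rewrite /disjoint_members /purify; elim: M => //= Q M IH repI.
have repI' i : 2 <= count (fun Q : {set 'I_n} => i \in Q) M -> i \in I.
  by move=> ?; apply: repI; apply: leq_trans (leq_addl _ _).
case: ifP => _ //=; last exact: IH.
rewrite IH // andbT; apply/allP => _ /mapP[Q' /[!mem_filter] /andP[_ Q'M] ->].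
rewrite -setI_eq0; apply/eqP/setP => i; rewrite !inE.
apply/negP => /andP[/andP[iI iQ] /andP[_ iQ']]; move/negP: iI; apply; apply: repI.
by rewrite iQ add1n ltnS -has_count; apply/hasP; exists Q'.
Qed.

Lemma pure_disjoint_uniq C M : pure_members C M -> disjoint_members M -> uniq M.
Proof.
elim: M => //= Q M IH /andP[/andP[Q0 _] pureM] /andP[QM disjM].
rewrite IH // andbT; apply/negP => /(allP QM).
by rewrite -setI_eq0 setIid (negbTE Q0).
Qed.

Lemma in_Iset_pure K i :
  (i \in Iset_pure K) = (2 <= count (fun Q : {set 'I_n} => i \in Q) (memb K)).
Proof.
rewrite /Iset_pure; case: ifP => [_|small]; rewrite inE //.
by apply/esym/negbTE; rewrite -ltnNge (leq_ltn_trans (count_size _ _)) // ltnNge small.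
Qed.

Lemma pure_members_pur K : pure_members (cond K) (memb (pur K)).
Proof. exact: purify_pure. Qed.

Lemma pur_id C M : pure_members C M -> pur (CMI C M) = CMI C M.
Proof. by move=> pureM; rewrite /pur /= -/(purify C M) purify_id. Qed.

Lemma degen_pure C M : pure_members C M -> degen (CMI C M) = (size M <= 1).
Proof. by move=> pureM; rewrite /degen pur_id. Qed.

Lemma IK_disjoint_cond K : [disjoint IK K & cond K].
Proof.
rewrite -setI_eq0; apply/eqP/setP => i; rewrite !inE /IK in_Iset_pure.
apply/negP => /andP[/ltnW]; rewrite -has_count => /hasP[Q QK iQ].
by case/andP: (allP (pure_members_pur K) Q QK) => _ /disjointFr ->.
Qed.

Lemma pure_members_PK K : pure_members (cond K) (PK K).
Proof. exact/purify_pureW/pure_members_pur. Qed.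

Lemma pure_members_PK_IK K : pure_members (IK K) (PK K).
Proof. exact: purify_pure. Qed.

Lemma PK_disjoint K : disjoint_members (PK K).
Proof. by apply: purify_disjoint => i; rewrite /IK in_Iset_pure. Qed.

Lemma PK_uniq K : uniq (PK K).
Proof. exact: pure_disjoint_uniq (pure_members_PK K) (PK_disjoint K). Qed.

Lemma size_PK K : size (PK K) <= size (memb (pur K)).
Proof. exact: size_purify. Qed.

Lemma IK_degen K : degen K -> IK K = set0.
Proof. by rewrite /degen /IK /Iset_pure ltnNge => ->. Qed.

Lemma PK_IK0 K : IK K = set0 -> PK K = memb (pur K).
Proof.
rewrite PKE => ->; apply: purify_id.
exact: pure_membersW (sub0set _) (pure_members_pur K).
Qed.

Lemma IK_pure_disjoint C M :
  pure_members C M -> disjoint_members M -> IK (CMI C M) = set0.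
Proof.
move=> pureM disjM; apply/setP => i; rewrite /IK pur_id // in_Iset_pure inE.
by apply/negbTE; rewrite -ltnNge ltnS count_disjoint_members.
Qed.

Lemma PK_pure_disjoint C M :
  pure_members C M -> disjoint_members M -> PK (CMI C M) = M.
Proof. by move=> pureM disjM; rewrite PK_IK0 ?pur_id // (IK_pure_disjoint pureM). Qed.

Definition can_members K : seq {set 'I_n} :=
  if IK K == set0 then PK K
  else IK K :: IK K :: (if size (PK K) <= 1 then [::] else PK K).

Lemma can_pur K : ~~ degen K -> can (pur K) = CMI (cond K) (can_members K).
Proof. by rewrite /degen /can /can_members => /negbTE ->; case: ifP => //; case: ifP. Qed.

Lemma can_pur_degen K : degen K -> can (pur K) = deg n.
Proof. by rewrite /degen /can => ->. Qed.

Lemma pure_can_members K : pure_members (cond K) (can_members K).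
Proof.
rewrite /can_members; case: ifP => [_|IK0]; first exact: pure_members_PK.
rewrite /= IK0 IK_disjoint_cond /=.
by case: ifP => // _; apply: pure_members_PK.
Qed.

Lemma can_members_size K : ~~ degen K -> 1 < size (can_members K).
Proof. by rewrite /can_members ltnNge; case: ifP => // /eqP /PK_IK0 ->. Qed.

Lemma degen_can_pur K : degen (can (pur K)) = degen K.
Proof.
have [dK|ndK] := boolP (degen K); first by rewrite can_pur_degen.
by rewrite can_pur // (degen_pure (pure_can_members K)) leqNgt can_members_size.
Qed.

Lemma can_members_uniq K : ~~ degen K -> uniq (can_members K) = (IK K == set0).
Proof. by rewrite /can_members; case: ifP => _ _; rewrite ?PK_uniq //= inE eqxx. Qed.

Lemma can_members_twice K Q :
  IK K != set0 -> (2 <= count_mem Q (can_members K)) = (Q == IK K).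
Proof.
move=> IK0; rewrite /can_members (negbTE IK0) /= [IK K == Q]eq_sym.
case: (Q =P IK K) => //= _; apply/negbTE; rewrite -ltnNge ltnS.
by case: ifP => // _; rewrite count_uniq_mem ?PK_uniq ?leq_b1.
Qed.

Lemma filter_pure_members C M : pure_members C M -> [seq Q <- M | Q != set0] = M.
Proof. by move=> /allP pureM; apply/all_filterP/allP => Q /pureM /andP[]. Qed.

Lemma cmi_eq_sym (K1 K2 : cmi n) : cmi_eq K1 K2 = cmi_eq K2 K1.
Proof. by rewrite /cmi_eq andbC eq_sym perm_sym. Qed.

Lemma cmi_eq_can_degen K K' :
  degen K -> cmi_eq (can (pur K)) (can (pur K')) = degen K'.
Proof.
move=> dK; rewrite /cmi_eq !degen_can_pur dK /=.
have [//|ndK'] := boolP (degen K'); apply/negbTE.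
rewrite can_pur_degen // can_pur //= (filter_pure_members (pure_can_members K')).
by apply/nandP; right; apply: contraL (can_members_size ndK') => /perm_size <-.
Qed.

Definition same_blocks A B : bool := perm_eq A B || (size A <= 1) && (size B <= 1).

Definition can_equiv K K' : Prop :=
  [/\ cond K = cond K', IK K = IK K' & same_blocks (PK K) (PK K')].

Lemma can_equiv_sym K K' : can_equiv K K' -> can_equiv K' K.
Proof. by case=> EC EI; split; rewrite // /same_blocks perm_sym andbC. Qed.

Lemma perm_can_members K K' : ~~ degen K -> ~~ degen K' ->
  perm_eq (can_members K) (can_members K') = (IK K == IK K') && same_blocks (PK K) (PK K').
Proof.
move=> ndK ndK'; apply/idP/idP => [pe|/andP[/eqP eIK same]].
  have [IK0|IK0] := eqVneq (IK K) set0.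
    have /eqP IK0' : IK K' == set0.
      by rewrite -can_members_uniq // -(perm_uniq pe) can_members_uniq // IK0.
    by move: pe; rewrite /can_members IK0 IK0' eqxx /same_blocks => ->.
  have eIK : IK K = IK K'.
    apply/eqP; have := can_members_twice (IK K) IK0.
    rewrite eqxx (permP pe) can_members_twice //.
    by rewrite -can_members_uniq // -(perm_uniq pe) can_members_uniq.
  rewrite eIK eqxx /same_blocks; move: pe.
  rewrite /can_members -eIK (negbTE IK0) !perm_cons.
  case: leqP => s1; case: leqP => s2 pe.
  - by rewrite /= orbT.
  - by move: s2; rewrite -(perm_size pe).
  - by move: s1; rewrite (perm_size pe).
  - by rewrite pe.
rewrite /can_members -eIK; case: ifP => IK0.
  case/orP: same => // /andP[small _].
  by have := can_members_size ndK; rewrite /can_members IK0 ltnNge small.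
rewrite !perm_cons; case/orP: same => [pe|/andP[-> ->] //].
by rewrite -(perm_size pe); case: ifP.
Qed.

Lemma cmi_eq_can K K' : ~~ degen K -> ~~ degen K' ->
  cmi_eq (can (pur K)) (can (pur K')) <-> can_equiv K K'.
Proof.
move=> ndK ndK'; rewrite /cmi_eq !degen_can_pur (negbTE ndK) /= !can_pur //=.
rewrite !(filter_pure_members (pure_can_members _)) perm_can_members //.
by split=> [/and3P[/eqP EC /eqP EI same] | [-> -> ->]]; [split | rewrite !eqxx].
Qed.

Lemma doubled_member_nondegen C D X : D != set0 -> [disjoint D & C] ->
  ~~ degen (CMI C (D :: D :: X)) /\ IK (CMI C (D :: D :: X)) != set0.
Proof.
move=> D0 DC.
have puDDX : memb (pur (CMI C (D :: D :: X))) = D :: D :: purify C X.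
  by rewrite memb_pur /purify /= (setDidPl DC) D0 /= (setDidPl DC).
split; first by rewrite /degen puDDX.
case/set0Pn: D0 => i iD; apply/set0Pn; exists i.
by rewrite /IK in_Iset_pure puDDX /= iD.
Qed.

Lemma Rcmi_new_index K K' : ~~ (IK K' \subset IK K) ->
  ~~ degen (Rcmi K K') /\ IK (Rcmi K K') != set0.
Proof.
move=> notsub; have D0 : IK K' :\: IK K != set0 by rewrite setD_eq0.
have DC : [disjoint IK K' :\: IK K & cond K' :\: IK K].
  exact: disjointW (subsetDl _ _) (subsetDl _ _) (IK_disjoint_cond K').
by rewrite /Rcmi (negbTE D0); case: ifP => _; apply: doubled_member_nondegen.
Qed.

Lemma Rcmi_sameIK K K' : IK K = IK K' ->
  Rcmi K K' = if size (PK K') <= 1 then deg n else CMI (cond K') (PK K').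
Proof.
move=> eIK; rewrite /Rcmi eIK setDv eqxx -/(purify _ _) purify_id ?pure_members_PK_IK //.
have -> // : cond K' :\: IK K' = cond K'.
by apply/setDidPl; rewrite disjoint_sym IK_disjoint_cond.
Qed.

Definition keeps_apart A B : Prop := forall (j1 j2 : nat) (m1 m2 : 'I_n),
  j1 < size A -> j2 < size A -> j1 != j2 ->
  m1 \in nth set0 A j1 -> m2 \in nth set0 A j2 ->
  exists i1 i2 : nat,
    [/\ i1 < size B, i2 < size B, i1 != i2, m1 \in nth set0 B i1 & m2 \in nth set0 B i2].

Lemma keeps_apart_size C A B :
  pure_members C A -> keeps_apart A B -> 1 < size A -> 1 < size B.
Proof.
move=> /allP pureA apart sA.
have [m0 m0A] : exists m, m \in nth set0 A 0.
  by apply/set0Pn; case/andP: (pureA _ (mem_nth set0 (ltnW sA))).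
have [m1 m1A] : exists m, m \in nth set0 A 1.
  by apply/set0Pn; case/andP: (pureA _ (mem_nth set0 sA)).
have [i1 [i2 [? ? ? _ _]]] := apart 0 1 m0 m1 (ltnW sA) sA isT m0A m1A.
lia.
Qed.

Lemma perm_keeps_apart A B : uniq A -> perm_eq A B -> keeps_apart A B.
Proof.
move=> uA pe j1 j2 m1 m2 j1A j2A ne m1j1 m2j2.
have inB j : j < size A -> nth set0 A j \in B by move=> jA; rewrite -(perm_mem pe) mem_nth.
exists (index (nth set0 A j1) B), (index (nth set0 A j2) B).
rewrite !index_mem !nth_index ?inB //; split=> //.
apply: contra ne => /eqP /(index_inj set0 (inB _ j1A) (inB _ j2A)) /eqP.
by rewrite nth_uniq.
Qed.

Lemma nth_disjoint_members B (j1 j2 : nat) x : disjoint_members B ->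
  j1 < size B -> j2 < size B -> x \in nth set0 B j1 -> x \in nth set0 B j2 -> j1 = j2.
Proof.
move=> /(pairwiseP set0) disjB j1B j2B xj1 xj2.
case: (ltngtP j1 j2) => // [lt12|lt21].
  by rewrite (disjointFr (disjB j1 j2 j1B j2B lt12) xj1) in xj2.
by rewrite (disjointFr (disjB j2 j1 j2B j1B lt21) xj2) in xj1.
Qed.

Lemma mem_bigcup_seq (s : seq {set 'I_n}) Q x :
  Q \in s -> x \in Q -> x \in \bigcup_(R <- s) R.
Proof. by move=> Qs xQ; rewrite bigcup_seq; apply/bigcupP; exists Q. Qed.

Lemma keeps_apart_block A B P P' m x : disjoint_members B -> keeps_apart A B ->
  P \in B -> P' \in A -> m \in P -> m \in P' -> x \in P -> x \in \bigcup_(Q <- A) Q ->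
  x \in P'.
Proof.
move=> disjB apart PB P'A mP mP' xP; rewrite bigcup_seq => /bigcupP[P'' P''A xP''].
have [<- //|neq] := eqVneq P'' P'.
(* m and x share the B-block P, so they cannot sit in distinct A-blocks. *)
have ne_idx : index P' A != index P'' A.
  by apply: contraNneq neq => /(index_inj set0 P'A P''A) ->.
have [||||i1 [i2 [i1B i2B ne mi1 xi2]]] := apart _ _ m x _ _ ne_idx;
  rewrite ?index_mem ?nth_index //.
have kB : index P B < size B by rewrite index_mem.
have e1 : i1 = index P B.
  by apply: nth_disjoint_members disjB i1B kB mi1 _; rewrite nth_index.
have e2 : i2 = index P B.
  by apply: nth_disjoint_members disjB i2B kB xi2 _; rewrite nth_index.
by rewrite e1 e2 eqxx in ne.
Qed.

Lemma keeps_apart_mem C A B :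
  pure_members C A -> disjoint_members A -> disjoint_members B ->
  \bigcup_(Q <- A) Q = \bigcup_(Q <- B) Q -> keeps_apart A B -> keeps_apart B A ->
  {subset A <= B}.
Proof.
move=> /allP pureA disjA disjB eqU apartAB apartBA P PA.
have [m mP] : exists m, m \in P by apply/set0Pn; case/andP: (pureA P PA).
have /[!bigcup_seq] /bigcupP[P' P'B mP'] : m \in \bigcup_(Q <- B) Q.
  by rewrite -eqU (mem_bigcup_seq PA).
suff -> : P = P' by [].
apply/setP => x; apply/idP/idP => xP.
  apply: (keeps_apart_block disjA apartBA PA P'B mP mP' xP).
  by rewrite -eqU (mem_bigcup_seq PA).
apply: (keeps_apart_block disjB apartAB P'B PA mP' mP xP).
by rewrite eqU (mem_bigcup_seq P'B).
Qed.

Lemma keeps_apart_perm C C' A B : pure_members C A -> disjoint_members A ->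
  pure_members C' B -> disjoint_members B -> \bigcup_(Q <- A) Q = \bigcup_(Q <- B) Q ->
  keeps_apart A B -> keeps_apart B A -> perm_eq A B.
Proof.
move=> pureA disjA pureB disjB eqU apartAB apartBA.
apply: uniq_perm; rewrite ?(pure_disjoint_uniq pureA) ?(pure_disjoint_uniq pureB) //.
move=> P; apply/idP/idP; first exact: (keeps_apart_mem pureA disjA disjB eqU).
exact: (keeps_apart_mem pureB disjB disjA (esym eqU)).
Qed.

Lemma disjoint_bigcup_pure C M : pure_members C M -> [disjoint C & \bigcup_(Q <- M) Q].
Proof.
move=> /allP pureM; rewrite bigcup_seq; apply/bigcup_disjointP => Q /pureM /andP[_].
by rewrite disjoint_sym.
Qed.

Lemma subCMI_IK K K' : ~~ degen K' -> subCMI K' K -> IK K' \subset IK K.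
Proof.
move=> ndK' sub; apply/contraT => notsub.
have [ndR IR] := Rcmi_new_index notsub.
case: sub => [dK'|[[dR _]|[_ [IR0 _]]]].
- by rewrite dK' in ndK'.
- by rewrite degen_can_pur (negbTE ndR) in dR.
- by rewrite IR0 eqxx in IR.
Qed.

Lemma subCMI_sameIK K K' : IK K = IK K' -> ~~ degen K' -> subCMI K' K ->
  cond K \subset cond K' /\
  (1 < size (PK K') -> Punion K' \subset Punion K /\ keeps_apart (PK K') (PK K)).
Proof.
move=> eIK ndK'; rewrite /subCMI Rcmi_sameIK //.
case: leqP => sPK'.
  case=> [dK'|[[_ sC]|[ndR _]]]; first by rewrite dK' in ndK'.
    by split=> //; rewrite ltnNge sPK'.
  by rewrite degen_can_pur in ndR.
have pureP := pure_members_PK K'; have disjP := PK_disjoint K'.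
rewrite /Punion !(PK_pure_disjoint pureP disjP) degen_can_pur (degen_pure pureP).
case=> [dK'|[[dR _]|[_ [_ [sU [sC [_ apart]]]]]]].
- by rewrite dK' in ndK'.
- by rewrite leqNgt sPK' in dR.
- by split.
Qed.

Lemma subCMI_degen K K' : degen K -> subCMI K' K -> degen K'.
Proof.
move=> dK sub; apply/contraT => ndK'.
have IK0 := IK_degen dK.
have IK0' : IK K' = set0 by apply/eqP; rewrite -subset0 -IK0 subCMI_IK.
have sPK' : 1 < size (PK K') by rewrite PK_IK0 // ltnNge.
have [_ /(_ sPK') [_ apart]] := subCMI_sameIK (etrans IK0 (esym IK0')) ndK' sub.
have := keeps_apart_size (pure_members_PK K') apart sPK'.
by rewrite ltnNge (leq_trans (size_PK K) dK).
Qed.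

Lemma can_equiv_subCMI K K' : can_equiv K K' -> subCMI K' K.
Proof.
case=> eC eIK /orP same; rewrite /subCMI Rcmi_sameIK //.
case: leqP => sPK'; first by right; left; rewrite degen_can_pur eC.
have pe : perm_eq (PK K) (PK K').
  by case: same => // /andP[_]; rewrite leqNgt sPK'.
have pureP := pure_members_PK K'; have disjP := PK_disjoint K'.
have eU : \bigcup_(Q <- PK K) Q = \bigcup_(Q <- PK K') Q := perm_big _ pe.
right; right; rewrite /Punion !(PK_pure_disjoint pureP disjP) degen_can_pur.
rewrite (degen_pure pureP) -ltnNge sPK' (IK_pure_disjoint pureP disjP) eU /=.
split=> //; split=> //; split=> //; split; first by rewrite eC.
split; first by rewrite /SK /Punion eU eC subsetD subsetUl disjoint_bigcup_pure.
by apply: perm_keeps_apart; rewrite 1?perm_sym ?PK_uniq.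
Qed.

Lemma subCMI_antisym K K' : ~~ degen K -> ~~ degen K' ->
  subCMI K' K -> subCMI K K' -> can_equiv K K'.
Proof.
move=> ndK ndK' sub sub'.
have eIK : IK K = IK K'.
  by apply/eqP; rewrite eqEsubset (subCMI_IK ndK' sub) (subCMI_IK ndK sub').
have [sC sP] := subCMI_sameIK eIK ndK' sub.
have [sC' sP'] := subCMI_sameIK (esym eIK) ndK sub'.
split=> //; first by apply/eqP; rewrite eqEsubset sC sC'.
rewrite /same_blocks; case: (leqP (size (PK K)) 1) => sPK;
  case: (leqP (size (PK K')) 1) => sPK'.
- by rewrite orbT.
- have [_ apart] := sP sPK'.
  by have := keeps_apart_size (pure_members_PK K') apart sPK'; rewrite ltnNge sPK.
- have [_ apart] := sP' sPK.
  by have := keeps_apart_size (pure_members_PK K) apart sPK; rewrite ltnNge sPK'.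
- have [sU apart] := sP sPK'; have [sU' apart'] := sP' sPK.
  apply/orP; left; apply: keeps_apart_perm (pure_members_PK K) (PK_disjoint K)
    (pure_members_PK K') (PK_disjoint K') _ apart' apart.
  by apply/eqP; rewrite eqEsubset sU sU'.
Qed.

End SubCMI.

Theorem mainTheorem14 (n : nat) (K K' : cmi n) :
  cmi_eq (can (pur K)) (can (pur K')) <-> (subCMI K' K /\ subCMI K K').
Proof.
have [dK|ndK] := boolP (degen K).
  rewrite cmi_eq_can_degen //; split=> [dK'|[sub _]]; last exact: subCMI_degen sub.
  by split; left.
have [dK'|ndK'] := boolP (degen K').
  rewrite cmi_eq_sym cmi_eq_can_degen // (negbTE ndK); split=> // -[_ sub].
  by rewrite (subCMI_degen dK' sub) in ndK.
rewrite cmi_eq_can //; split=> [equiv|[sub sub']]; last exact: subCMI_antisym.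
by split; apply: can_equiv_subCMI; last apply: can_equiv_sym.
Qed.
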